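(* Let $N\geq 2$ and let $\Sigma$ be the one-sided shift on $\{0,1,\dots,N-1\}^{\mathbb{N}_0}$, ordered lexicographically. Then for every $L\geq N+2$ there exists a forbidden order pattern $\pi\in\mathcal{S}_L$ for $\Sigma$.
   Context: $\{0,1,\dots,N-1\}^{\mathbb{N}_0}$ is the set of sequences $\omega=(\omega_0,\omega_1,\dots)$ with $\omega_n\in\{0,\dots,N-1\}$, and $\Sigma(\omega_0,\omega_1,\omega_2,\dots)=(\omega_1,\omega_2,\dots)$. The lexicographic order: $\omega<\omega'$ iff $\omega_0<\omega'_0$, or there is $n\geq1$ with $\omega_k=\omega'_k$ for $k<n$ and $\omega_n<\omega'_n$. $\mathcal{S}_L$ is the set of permutations $\pi=[\pi_0,\dots,\pi_{L-1}]$ of $\{0,\dots,L-1\}$. A sequence $\omega$ defines $\pi$ if $\Sigma^{\pi_0}(\omega)<\Sigma^{\pi_1}(\omega)<\dots<\Sigma^{\pi_{L-1}}(\omega)$. A pattern $\pi\in\mathcal{S}_L$ is forbidden for $\Sigma$ if no $\omega$ defines it. *)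

From mathcomp Require Import all_boot all_order all_fingroup.
Set Implicit Arguments. Unset Strict Implicit. Unset Printing Implicit Defensive.

Definition word (N : nat) := nat -> 'I_N.

Definition shift (N : nat) (w : word N) : word N := fun n => w n.+1.
Definition shiftn (N : nat) (k : nat) (w : word N) : word N := iter k (@shift N) w.

Definition lexlt (N : nat) (w w' : word N) : Prop :=
  exists n : nat, (forall k, k < n -> w k = w' k) /\ (w n < w' n)%N.

Definition defines (N L : nat) (w : word N) (pi : 'S_L) : Prop :=
  forall i j : 'I_L, (i < j)%N -> lexlt (shiftn (pi i) w) (shiftn (pi j) w).

Definition forbidden (N L : nat) (pi : 'S_L) : Prop :=
  ~ exists w : word N, defines w pi.

From mathcomp Require Import all_boot all_order all_fingroup.
From mathcomp Require Import zify.

Set Implicit Arguments. Unset Strict Implicit. Unset Printing Implicit Defensive.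

(* If Sigma^a w < Sigma^b w while Sigma^(b+1) w < Sigma^(a+1) w, the two words
   must already differ at their first letter, so w_a < w_b.  The pattern
   [zigzag_perm M] lists M-1, M-3, ... downwards and then the remaining
   positions upwards up to M; for each consecutive pair (pi_k, pi_(k+1)) with
   k + 1 < M the successors pi_k + 1 and pi_(k+1) + 1 occur in reversed order
   in pi.  Any w defining pi therefore has M strictly increasing letters
   w_(pi_0) < ... < w_(pi_(M-1)), which is impossible when M > N. *)

Lemma shiftnS N k (w : word N) : shiftn k.+1 w = shift (shiftn k w).
Proof. by []. Qed.

Lemma shiftnE N k (w : word N) n : shiftn k w n = w (k + n).
Proof. by elim: k n => // k IH n; rewrite shiftnS /shift IH addnS. Qed.

Lemma shiftn0E N k (w : word N) : shiftn k w 0 = w k.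
Proof. by rewrite shiftnE addn0. Qed.

Section Lexicographic.

Variable N : nat.
Implicit Types u v : word N.

Lemma lexlt_asym u v : lexlt u v -> ~ lexlt v u.
Proof.
case=> n [eq_uv lt_uv] [m [eq_vu lt_vu]].
case: (ltngtP n m) => [lt_nm | lt_mn | eq_nm].
- by move: lt_uv; rewrite (eq_vu _ lt_nm) ltnn.
- by move: lt_vu; rewrite (eq_uv _ lt_mn) ltnn.
- by subst m; move: lt_uv lt_vu; lia.
Qed.

Lemma lexlt_head_le u v : lexlt u v -> (u 0 <= v 0)%N.
Proof.
case=> [[|n]] [eq_uv lt_uv]; first exact: ltnW.
by rewrite (eq_uv 0).
Qed.

Lemma lexlt_behead u v : lexlt u v -> u 0 = v 0 -> lexlt (shift u) (shift v).
Proof.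
case=> [[|n]] [eq_uv lt_uv] eq0; first by move: lt_uv; rewrite eq0 ltnn.
by exists n; split=> // k lt_kn; apply: eq_uv.
Qed.

Lemma lexlt_head_lt u v :
  lexlt u v -> lexlt (shift v) (shift u) -> (u 0 < v 0)%N.
Proof.
move=> lt_uv lt_vu'; rewrite ltn_neqAle lexlt_head_le // andbT.
apply/negP => /eqP/val_inj eq0.
exact: lexlt_asym (lexlt_behead lt_uv eq0) lt_vu'.
Qed.

End Lexicographic.

Lemma defines_letter_lt N L (w : word N) (pi : 'S_L) (i j i' j' : 'I_L) :
  defines w pi -> (i < j)%N -> (j' < i')%N ->
  pi i' = (pi i).+1 :> nat -> pi j' = (pi j).+1 :> nat ->
  (w (pi i) < w (pi j))%N.
Proof.
move=> def_w lt_ij lt_ji' succ_i succ_j.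
rewrite -(shiftn0E (pi i)) -(shiftn0E (pi j)); apply: lexlt_head_lt; first exact: def_w.
by rewrite -!shiftnS -succ_i -succ_j; apply: def_w.
Qed.

Lemma increasing_letters_le N (f : nat -> 'I_N) n :
  (forall k, k.+1 < n -> f k < f k.+1) -> n <= N.
Proof.
move=> incr_f; case: n incr_f => // n incr_f.
suff le_kf k : k <= n -> k <= f k 
  by have := le_kf n (leqnn n); have := ltn_ord (f n); lia.
elim: k => // k IH lt_kn.
by have := incr_f k ltac:(lia); have := IH (ltnW lt_kn); lia.
Qed.

Definition zigzag (M k : nat) := if 2 * k < M then M - 1 - 2 * k else 2 * k - M.

(* The index at which [zigzag M k + 1] occurs. *)
Definition zigzag_next (M k : nat) := if 2 * k < M then M - k else M - 1 - k.

Lemma zigzag_le M k : k <= M -> zigzag M k <= M.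
Proof. by rewrite /zigzag; case: ifP; lia. Qed.

Lemma zigzag_inj M i j : i <= M -> j <= M -> zigzag M i = zigzag M j -> i = j.
Proof. by rewrite /zigzag; case: ifP; case: ifP; lia. Qed.

Lemma zigzag_nextP M k : k < M -> zigzag M (zigzag_next M k) = (zigzag M k).+1.
Proof. by rewrite /zigzag /zigzag_next; case: ifP; case: ifP; lia. Qed.

Lemma zigzag_next_le M k : k < M -> zigzag_next M k <= M.
Proof. by rewrite /zigzag_next; case: ifP; lia. Qed.

Lemma zigzag_next_decr M k : k.+1 < M -> zigzag_next M k.+1 < zigzag_next M k.
Proof. by rewrite /zigzag_next; case: ifP; case: ifP; lia. Qed.

Definition zigzag_ord M (k : 'I_M.+1) : 'I_M.+1 := inord (zigzag M k).

Lemma zigzag_ordE M (k : 'I_M.+1) : zigzag_ord k = zigzag M k :> nat.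
Proof. by rewrite inordK // ltnS zigzag_le // -ltnS. Qed.

Lemma zigzag_ord_inj M : injective (@zigzag_ord M).
Proof.
move=> i j /(congr1 val) /=; rewrite !zigzag_ordE => /zigzag_inj eq_ij.
by apply: val_inj; apply: eq_ij; rewrite -ltnS.
Qed.

Definition zigzag_perm M : 'S_M.+1 := perm (@zigzag_ord_inj M).

Lemma zigzag_permE M k : k <= M -> zigzag_perm M (inord k) = zigzag M k :> nat.
Proof. by move=> le_kM; rewrite permE zigzag_ordE inordK. Qed.

Lemma zigzag_perm_forbidden N M : N < M -> forbidden N (zigzag_perm M).
Proof.
move=> lt_NM [w def_w].
suff incr k : k.+1 < M -> w (zigzag M k) < w (zigzag M k.+1).
  by have := increasing_letters_le incr; lia.
move=> lt_kM; have le_next := zigzag_next_le (ltnW lt_kM).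
have le_next' := zigzag_next_le lt_kM.
have := @defines_letter_lt _ _ w _ (inord k) (inord k.+1)
  (inord (zigzag_next M k)) (inord (zigzag_next M k.+1)) def_w.
rewrite !zigzag_permE ?zigzag_nextP ?inordK ?ltnS //; try lia.
by apply; rewrite ?zigzag_next_decr.
Qed.

Theorem proposition4 (N : nat) (HN : 2 <= N) (L : nat) (HL : N + 2 <= L) :
  exists pi : 'S_L, forbidden N pi.
Proof.
case: L HL => [|M] HL; first by lia.
by exists (zigzag_perm M); apply: zigzag_perm_forbidden; lia.
Qed.
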